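(* Let $\lambda_1,\lambda_2\ge0$ with $\lambda_1+\lambda_2(p-1)>0$, and let $w_i=\lambda_1+\lambda_2(p-i)$ for $i=1,\dots,p$ (the OSCAR weights). Let $\mathbf A\in\mathbb R^{n\times p}$ have columns with $\mathbf 1^T\mathbf a_k=0$ and $\|\mathbf a_k\|_2=1$ for all $k$, let $\rho_{ij}=\mathbf a_i^T\mathbf a_j$, and let $\mathbf y\in\mathbb R^n$. Let $\widehat{\mathbf x}$ be any minimizer of $\frac12\|\mathbf A\mathbf x-\mathbf y\|_2^2+\sum_{i=1}^p w_i|x|_{[i]}$ over $\mathbf x\in\mathbb R^p$. Then for every pair $(i,j)$ with $\|\mathbf y\|_2\sqrt{2-2\rho_{ij}\operatorname{sign}(\widehat x_i\widehat x_j)}<\lambda_2$, we have $|\widehat x_i|=|\widehat x_j|$.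
   Context: $|x|_{[i]}$ denotes the $i$-th largest component of $\mathbf x$ in magnitude; $\mathbf a_k$ is the $k$-th column of $\mathbf A$; $\mathbf 1$ is the all-ones vector; $\operatorname{sign}$ denotes the sign function. *)

From HB Require Import structures.
From mathcomp Require Import all_boot all_order all_algebra.
Set Implicit Arguments. Unset Strict Implicit. Unset Printing Implicit Defensive.
Import Order.TTheory GRing.Theory Num.Theory.
Local Open Scope ring_scope.

Definition sorted_abs (R : rcfType) (p : nat) (x : 'cV[R]_p) : seq R :=
  sort (fun a b => b <= a) [seq `|x i 0| | i <- enum 'I_p].

(* |x|_[k+1] : the (k+1)-th largest entry of x in magnitude (0-based k) *)
Definition abs_ord (R : rcfType) (p : nat) (x : 'cV[R]_p) (k : nat) : R :=
  nth 0 (sorted_abs x) k.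

(* OSCAR weight w_{k+1} = l1 + l2 (p - (k+1)), 0-based k *)
Definition oscar_w (R : rcfType) (l1 l2 : R) (p k : nat) : R :=
  l1 + l2 * (p - k.+1)%:R.

Definition norm2 (R : rcfType) (n : nat) (v : 'cV[R]_n) : R :=
  Num.sqrt (\sum_(r < n) v r 0 ^+ 2).

Definition oscar_obj (R : rcfType) (n p : nat) (l1 l2 : R)
  (A : 'M[R]_(n, p)) (y : 'cV[R]_n) (x : 'cV[R]_p) : R :=
  2^-1 * (\sum_(r < n) (A *m x - y) r 0 ^+ 2)
  + \sum_(k < p) oscar_w l1 l2 p k * abs_ord x k.

From mathcomp Require Import all_boot all_order all_algebra.
From mathcomp Require Import ring lra.
Import Order.TTheory GRing.Theory Num.Theory.
Local Open Scope ring_scope.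

Set Implicit Arguments. Unset Strict Implicit. Unset Printing Implicit Defensive.

(* OSCAR penalty: sum_k w_k |x|_[k] = l1 sum_i |x_i| + l2 sum_(i<j) max(|x_i|, |x_j|).
   Suppose |x_i| > |x_j| at a minimizer and move mass e from |x_i| to |x_j|, keeping
   the signs: the sum of magnitudes is unchanged and, as long as the two entries do not
   cross, every pairwise maximum can only decrease, while max(|x_i|, |x_j|) drops by e;
   so the penalty decreases by at least l2 e.  The residual r = A x - y moves along
   v = sign(x_j) a_j - sign(x_i) a_i, with ||v||^2 = 2 - 2 rho_ij sign(x_i x_j), so the
   loss grows by e <r, v> + O(e^2) <= e ||y|| ||v|| + O(e^2), because ||r|| <= ||y||
   (compare with x = 0).  Hence ||y|| ||v|| < l2 contradicts optimality. *)

Section PairwiseMax.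
Variable R : rcfType.

Definition sum_pairmax (p : nat) (u : 'I_p -> R) : R :=
  \sum_k \sum_l Num.max (u k) (u l).

Lemma sum_max_sorted (s : seq R) : sorted (fun a b => b <= a) s ->
  2 * (\sum_(k < size s) (size s - k.+1)%:R * nth 0 s k) + \sum_(a <- s) a =
  \sum_(a <- s) \sum_(b <- s) Num.max a b.
Proof.
elim: s => [|a s IHs] /= s_sorted; first by rewrite !big_nil big_ord0 mulr0 add0r.
have a_top : all (fun b => b <= a) s.
  by apply: order_path_min s_sorted => u v w /= vu wv; apply: le_trans wv vu.
have max_aE : \sum_(b <- s) Num.max a b = a *+ size s.
  rewrite -[RHS]iter_addr_0 -count_predT -big_const_seq big_seq [RHS]big_seq.
  by apply: eq_bigr => b /(allP a_top) ba; rewrite max_l.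
have max_bE : \sum_(b <- s) \sum_(c <- a :: s) Num.max b c =
    a *+ size s + \sum_(b <- s) \sum_(c <- s) Num.max b c.
  rewrite -[a *+ _]iter_addr_0 -count_predT -big_const_seq -big_split /=.
  rewrite big_seq [RHS]big_seq; apply: eq_bigr => b /(allP a_top) ba.
  by rewrite big_cons max_r.
rewrite big_ord_recl !big_cons maxxx max_aE max_bE subn1 /=.
rewrite -(IHs (path_sorted s_sorted)) -mulr_natl.
under [\sum_(i < size s) _]eq_bigr do rewrite subSS.
ring.
Qed.

Lemma bigD2 (p : nat) (F : 'I_p -> R) (i j : 'I_p) : i != j ->
  \sum_k F k = F i + F j + \sum_(k | (k != i) && (k != j)) F k.
Proof.
move=> ij; rewrite (bigD1 i) //= (bigD1 j) /=; last by rewrite eq_sym.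
by rewrite addrA.
Qed.

Lemma double_bigD2 (p : nat) (G : 'I_p -> 'I_p -> R) (i j : 'I_p) : i != j ->
  \sum_k \sum_l G k l = G i i + G j j + G i j + G j i
   + \sum_(k | (k != i) && (k != j)) (G i k + G k i + G j k + G k j)
   + \sum_(k | (k != i) && (k != j)) \sum_(l | (l != i) && (l != j)) G k l.
Proof.
move=> ij; under eq_bigr => k _ do rewrite (bigD2 (G k) ij).
rewrite (bigD2 (fun k => G k i + G k j + _) ij) !big_split /=; ring.
Qed.

Lemma max_transfer_le (a b c e : R) : 0 <= e -> b + e <= a - e ->
  Num.max (a - e) c + Num.max (b + e) c <= Num.max a c + Num.max b c.
Proof.
move=> e_ge0 no_cross.
by case: (leP (a - e) c); case: (leP (b + e) c); case: (leP a c); case: (leP b c);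
  lra.
Qed.

Lemma sum_pairmax_transfer (p : nat) (u v : 'I_p -> R) (i j : 'I_p) (e : R) :
  i != j -> 0 <= e -> u j + e <= u i - e ->
  v i = u i - e -> v j = u j + e -> (forall k, k != i -> k != j -> v k = u k) ->
  sum_pairmax v <= sum_pairmax u - 2 * e.
Proof.
move=> ij e_ge0 no_cross vi vj vk.
rewrite /sum_pairmax (double_bigD2 (fun k l => Num.max (v k) (v l)) ij).
rewrite (double_bigD2 (fun k l => Num.max (u k) (u l)) ij) vi vj /=.
have mixed_le : \sum_(k | (k != i) && (k != j))
      (Num.max (u i - e) (v k) + Num.max (v k) (u i - e)
       + Num.max (u j + e) (v k) + Num.max (v k) (u j + e))
    <= \sum_(k | (k != i) && (k != j))
      (Num.max (u i) (u k) + Num.max (u k) (u i)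
       + Num.max (u j) (u k) + Num.max (u k) (u j)).
  apply: ler_sum => k /andP[ki kj]; rewrite vk // !(maxC (u k)).
  by have := max_transfer_le (u k) e_ge0 no_cross; lra.
have rest_eq : \sum_(k | (k != i) && (k != j)) \sum_(l | (l != i) && (l != j))
      Num.max (v k) (v l)
    = \sum_(k | (k != i) && (k != j)) \sum_(l | (l != i) && (l != j))
      Num.max (u k) (u l).
  apply: eq_bigr => k /andP[ki kj]; apply: eq_bigr => l /andP[li lj].
  by rewrite !vk.
rewrite rest_eq !maxxx (max_l no_cross) (max_r no_cross).
rewrite (@max_l _ _ (u i)) ?(@max_r _ _ (u j)) //; lra.
Qed.

End PairwiseMax.

Section OscarPenalty.
Variables (R : rcfType) (p : nat) (l1 l2 : R).

Definition oscar_pen (x : 'cV[R]_p) : R :=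
  \sum_(k < p) oscar_w l1 l2 p k * abs_ord x k.

Lemma oscar_penE (x : 'cV[R]_p) :
  2 * oscar_pen x = 2 * l1 * (\sum_i `|x i 0|)
    + l2 * (sum_pairmax (fun i => `|x i 0|) - \sum_i `|x i 0|).
Proof.
rewrite /oscar_pen /abs_ord /sorted_abs.
set s := sort _ _.
have s_perm : perm_eq s [seq `|x i 0| | i <- enum 'I_p] by rewrite perm_sort.
have s_size : size s = p by rewrite size_sort size_map size_enum_ord.
have s_sorted : sorted (fun a b => b <= a) s.
  by apply: sort_sorted => a b; apply: le_total.
have sum_sE (F : R -> R) : \sum_(a <- s) F a = \sum_i F `|x i 0|.
  by rewrite (perm_big _ s_perm) big_map big_enum.
have := sum_max_sorted s_sorted; rewrite s_size !sum_sE.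
under [in RHS]eq_bigr do rewrite sum_sE.
rewrite -/(sum_pairmax _) => <-.
rewrite /oscar_w.
under eq_bigr do rewrite mulrDl -mulrA.
rewrite big_split /= -!mulr_sumr.
have -> : \sum_(k < p) nth 0 s k = \sum_i `|x i 0|.
  by rewrite -[RHS](sum_sE id) (big_nth 0) s_size big_mkord.
ring.
Qed.

Lemma oscar_pen_ge0 (x : 'cV[R]_p) : 0 <= l1 -> 0 <= l2 -> 0 <= oscar_pen x.
Proof.
move=> l1_ge0 l2_ge0; apply: sumr_ge0 => k _; apply: mulr_ge0.
  by rewrite /oscar_w addr_ge0 // mulr_ge0.
rewrite /abs_ord /sorted_abs; set s := sort _ _.
have [k_lt | k_ge] := ltnP k (size s); last by rewrite nth_default.
by move: (mem_nth 0 k_lt); rewrite mem_sort => /mapP[i _ ->].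
Qed.

Lemma oscar_pen0 : oscar_pen 0 = 0.
Proof.
have abs0 (i : 'I_p) : `|(0 : 'cV[R]_p) i 0| = 0 by rewrite mxE normr0.
have sum0 : \sum_i `|(0 : 'cV[R]_p) i 0| = 0 by apply: big1 => i _.
have pairmax0 : sum_pairmax (fun i => `|(0 : 'cV[R]_p) i 0|) = 0.
  by apply: big1 => k _; apply: big1 => l _; rewrite !abs0 maxxx.
by have := oscar_penE 0; rewrite sum0 pairmax0; lra.
Qed.

Lemma oscar_pen_transfer (x x' : 'cV[R]_p) (i j : 'I_p) (e : R) :
  0 <= l2 -> i != j -> 0 <= e -> `|x j 0| + e <= `|x i 0| - e ->
  `|x' i 0| = `|x i 0| - e -> `|x' j 0| = `|x j 0| + e ->
  (forall k, k != i -> k != j -> `|x' k 0| = `|x k 0|) ->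
  oscar_pen x' <= oscar_pen x - l2 * e.
Proof.
move=> l2_ge0 ij e_ge0 no_cross x'i x'j x'k.
have sum_eq : \sum_k `|x' k 0| = \sum_k `|x k 0|.
  rewrite (bigD2 (fun k => `|x' k 0|) ij) (bigD2 (fun k => `|x k 0|) ij) x'i x'j.
  under eq_bigr => k /andP[ki kj] do rewrite x'k //.
  ring.
have := sum_pairmax_transfer ij e_ge0 no_cross x'i x'j x'k.
move=> /(ler_wpM2l l2_ge0).
have := oscar_penE x; have := oscar_penE x'; rewrite sum_eq.
lra.
Qed.

Definition pair_transfer (i j : 'I_p) (si sj : R) : 'cV[R]_p :=
  \col_k (sj * (k == j)%:R - si * (k == i)%:R).

Lemma abs_sign_mul (s t : R) : s ^+ 2 = 1 -> 0 <= t -> `|s * t| = t.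
Proof.
move=> s2 t_ge0; have /eqP s_abs : `|s| == 1 by rewrite -sqr_norm_eq1 s2.
by rewrite normrM s_abs mul1r ger0_norm.
Qed.

Lemma oscar_pen_pair_transfer (x : 'cV[R]_p) (i j : 'I_p) (si sj e : R) :
  0 <= l2 -> i != j -> si ^+ 2 = 1 -> sj ^+ 2 = 1 ->
  x i 0 = si * `|x i 0| -> x j 0 = sj * `|x j 0| ->
  0 <= e -> `|x j 0| + e <= `|x i 0| - e ->
  oscar_pen (x + e *: pair_transfer i j si sj) <= oscar_pen x - l2 * e.
Proof.
move=> l2_ge0 ij si2 sj2 xiE xjE e_ge0 no_cross.
have xj_ge0 := normr_ge0 (x j 0).
have x'E k : (x + e *: pair_transfer i j si sj) k 0
    = x k 0 + e * (sj * (k == j)%:R - si * (k == i)%:R) by rewrite !mxE.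
apply: (oscar_pen_transfer (i := i) (j := j)) => // [||k ki kj]; rewrite x'E.
- rewrite eqxx (negbTE ij) /=.
  have -> : x i 0 + e * (sj * 0 - si * 1) = si * (`|x i 0| - e) by rewrite {1}xiE; ring.
  by rewrite abs_sign_mul //; lra.
- rewrite eqxx eq_sym (negbTE ij) /=.
  have -> : x j 0 + e * (sj * 1 - si * 0) = sj * (`|x j 0| + e) by rewrite {1}xjE; ring.
  by rewrite abs_sign_mul //; lra.
- by rewrite (negbTE ki) (negbTE kj) /= !mulr0 subrr mulr0 addr0.
Qed.

End OscarPenalty.

Lemma mulmx_pair_transfer (R : rcfType) (n p : nat) (A : 'M[R]_(n, p))
    (i j : 'I_p) (si sj : R) (r : 'I_n) : i != j ->
  (A *m pair_transfer i j si sj) r 0 = sj * A r j - si * A r i.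
Proof.
move=> ij; rewrite mxE (bigD2 (fun k => A r k * _) ij) big1.
  by rewrite !mxE eqxx (negbTE ij) eq_sym (negbTE ij) eqxx /=; ring.
by move=> k /andP[ki kj]; rewrite mxE (negbTE ki) (negbTE kj) /=; ring.
Qed.

Section LeastSquares.
Variables (R : rcfType) (n p : nat) (A : 'M[R]_(n, p)) (y : 'cV[R]_n).

Definition sqerr (x : 'cV[R]_p) : R := \sum_r (A *m x - y) r 0 ^+ 2.

Lemma sqerrD (x d : 'cV[R]_p) :
  sqerr (x + d) = sqerr x + 2 * (\sum_r (A *m x - y) r 0 * (A *m d) r 0)
                  + \sum_r (A *m d) r 0 ^+ 2.
Proof.
rewrite /sqerr mulr_sumr -!big_split /=; apply: eq_bigr => r _.
rewrite mulmxDr !mxE; ring.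
Qed.

End LeastSquares.

Section CauchySchwarz.
Variables (R : rcfType) (n : nat).

Lemma cauchy_schwarz (F G : 'I_n -> R) :
  (\sum_r F r * G r) ^+ 2 <= (\sum_r F r ^+ 2) * (\sum_r G r ^+ 2).
Proof.
have lagrange : \sum_k \sum_l (F k * G l - F l * G k) ^+ 2 =
    (\sum_k F k ^+ 2) * (\sum_l G l ^+ 2) + (\sum_k G k ^+ 2) * (\sum_l F l ^+ 2)
    - (\sum_k 2 * (F k * G k)) * (\sum_l F l * G l).
  rewrite !big_distrlr -big_split -sumrB /=; apply: eq_bigr => k _.
  by rewrite -big_split -sumrB /=; apply: eq_bigr => l _; ring.
have : 0 <= \sum_k \sum_l (F k * G l - F l * G k) ^+ 2.
  by apply: sumr_ge0 => k _; apply: sumr_ge0 => l _; apply: sqr_ge0.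
rewrite lagrange -mulr_sumr expr2; lra.
Qed.

Lemma sum_mul_le_sqrt (F G : 'I_n -> R) :
  \sum_r F r * G r <= Num.sqrt (\sum_r F r ^+ 2) * Num.sqrt (\sum_r G r ^+ 2).
Proof.
rewrite -sqrtrM; last by apply: sumr_ge0 => r _; apply: sqr_ge0.
apply: le_trans (ler_norm _) _; rewrite -sqrtr_sqr.
by apply: ler_wsqrtr; apply: cauchy_schwarz.
Qed.

End CauchySchwarz.

Lemma exists_small_step (R : rcfType) (d c q : R) :
  0 < d -> 0 < c -> 0 <= q -> exists2 e, 0 < e <= d & e * q < c.
Proof.
move=> d_gt0 c_gt0 q_ge0; have q1_gt0 : 0 < q + 1 by lra.
exists (Num.min d (c / (q + 1))).
  by rewrite lt_min d_gt0 divr_gt0 //= ge_min lexx.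
apply: le_lt_trans (_ : c / (q + 1) * q < c).
  by rewrite ler_wpM2r // ge_min lexx orbT.
by rewrite mulrAC ltr_pdivrMr // ltr_pM2l //; lra.
Qed.

Lemma sum_sqr_signed_diff (R : rcfType) (n p : nat) (A : 'M[R]_(n, p))
    (i j : 'I_p) (si sj : R) :
  \sum_r A r i ^+ 2 = 1 -> \sum_r A r j ^+ 2 = 1 -> si ^+ 2 = 1 -> sj ^+ 2 = 1 ->
  \sum_r (sj * A r j - si * A r i) ^+ 2
    = 2 - 2 * (\sum_r A r i * A r j) * (si * sj).
Proof.
move=> ai aj si2 sj2.
transitivity (sj ^+ 2 * (\sum_r A r j ^+ 2) + si ^+ 2 * (\sum_r A r i ^+ 2)
    - 2 * (\sum_r A r i * A r j) * (si * sj)); last by rewrite ai aj si2 sj2; ring.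
rewrite !mulr_sumr mulr_suml -big_split -sumrB /=.
by apply: eq_bigr => r _; ring.
Qed.

Section OscarOptimality.
Variables (R : rcfType) (n p : nat) (l1 l2 : R) (A : 'M[R]_(n, p)) (y : 'cV[R]_n).

Lemma oscar_objE (x : 'cV[R]_p) :
  oscar_obj l1 l2 A y x = 2^-1 * sqerr A y x + oscar_pen l1 l2 x.
Proof. by []. Qed.

Variable x : 'cV[R]_p.
Hypotheses (l1_ge0 : 0 <= l1) (l2_ge0 : 0 <= l2)
  (unit_cols : forall k, \sum_r A r k ^+ 2 = 1)
  (x_opt : forall z, oscar_obj l1 l2 A y x <= oscar_obj l1 l2 A y z).

Lemma sqerr_opt_le : sqerr A y x <= \sum_r y r 0 ^+ 2.
Proof.
have sqerr0 : sqerr A y 0 = \sum_r y r 0 ^+ 2.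
  by apply: eq_bigr => r _; rewrite mulmx0 !mxE sub0r sqrrN.
have := x_opt 0; rewrite !oscar_objE oscar_pen0 sqerr0.
have := oscar_pen_ge0 x l1_ge0 l2_ge0; lra.
Qed.

Lemma oscar_opt_transfer_bound (i j : 'I_p) (si sj : R) :
  i != j -> `|x j 0| < `|x i 0| -> si ^+ 2 = 1 -> sj ^+ 2 = 1 ->
  x i 0 = si * `|x i 0| -> x j 0 = sj * `|x j 0| ->
  l2 <= norm2 y * Num.sqrt (2 - 2 * (\sum_r A r i * A r j) * (si * sj)).
Proof.
move=> ij lt_ji si2 sj2 xiE xjE.
pose v r := sj * A r j - si * A r i.
have vE : \sum_r v r ^+ 2 = 2 - 2 * (\sum_r A r i * A r j) * (si * sj).
  exact: sum_sqr_signed_diff.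
rewrite -vE; set q := \sum_r v r ^+ 2.
have q_ge0 : 0 <= q by apply: sumr_ge0 => r _; apply: sqr_ge0.
rewrite leNgt; apply/negP => small.
pose C := \sum_r (A *m x - y) r 0 * v r.
have C_le : C <= norm2 y * Num.sqrt q.
  apply: le_trans (sum_mul_le_sqrt _ _) _; rewrite ler_wpM2r ?sqrtr_ge0 //.
  by apply: ler_wsqrtr; apply: sqerr_opt_le.
have [|||e /andP[e_gt0 e_le] eq_lt] := @exists_small_step _
  ((`|x i 0| - `|x j 0|) / 2) (l2 - norm2 y * Num.sqrt q) q; try lra.
pose D := pair_transfer i j si sj.
have AD r : (A *m (e *: D)) r 0 = e * v r.
  by rewrite -scalemxAr mxE mulmx_pair_transfer.
have no_cross : `|x j 0| + e <= `|x i 0| - e by lra.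
have pen_le :=
  oscar_pen_pair_transfer l1 l2_ge0 ij si2 sj2 xiE xjE (ltW e_gt0) no_cross.
have err_eq : sqerr A y (x + e *: D) = sqerr A y x + 2 * (e * C) + e * (e * q).
  rewrite sqerrD /C /q !mulr_sumr.
  by congr (_ + _ + _); apply: eq_bigr => r _; rewrite AD; ring.
have := x_opt (x + e *: D); rewrite !oscar_objE err_eq.
have : e * C <= e * (norm2 y * Num.sqrt q) by rewrite ler_wpM2l // ltW.
have : e * (e * q) < e * (l2 - norm2 y * Num.sqrt q) by rewrite ltr_pM2l.
have : e * (norm2 y * Num.sqrt q) < e * l2 by rewrite ltr_pM2l.
have := pen_le; lra.
Qed.

Lemma oscar_opt_abs_le (i j : 'I_p) : i != j ->
  norm2 y * Num.sqrt (2 - 2 * (\sum_r A r i * A r j) * Num.sg (x i 0 * x j 0)) < l2 ->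
  `|x i 0| <= `|x j 0|.
Proof.
move=> ij small; rewrite leNgt; apply/negP => lt_ji.
set rho := \sum_r A r i * A r j in small.
have xi_neq0 : x i 0 != 0.
  by apply: contraTneq lt_ji => ->; rewrite normr0 -leNgt normr_ge0.
have si2 : Num.sg (x i 0) ^+ 2 = 1 by rewrite sqr_sg xi_neq0.
suff [sj sj2 xjE] : exists2 sj : R, sj ^+ 2 = 1 & x j 0 = sj * `|x j 0| /\
    2 - 2 * rho * (Num.sg (x i 0) * sj) <= 2 - 2 * rho * Num.sg (x i 0 * x j 0).
  case: xjE => xjE le_rad.
  have := oscar_opt_transfer_bound ij lt_ji si2 sj2 (numEsg _) xjE.
  apply/negP; rewrite -ltNge; apply: le_lt_trans small.
  by rewrite ler_wpM2l ?sqrtr_ge0 // ler_wsqrtr.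
have [xj0 | xj_neq0] := eqVneq (x j 0) 0; last first.
  exists (Num.sg (x j 0)); first by rewrite sqr_sg xj_neq0.
  split; first exact: numEsg.
  by rewrite sgrM lexx.
(* x_j = 0 has no sign: choose it so that the transfer direction has norm at most sqrt 2 *)
exists (if 0 <= rho then Num.sg (x i 0) else - Num.sg (x i 0)).
  by case: ifP; rewrite ?sqrrN.
split; first by rewrite xj0 normr0 mulr0.
rewrite xj0 mulr0 sgr0 mulr0 subr0; case: ifPn => [rho_ge0 | ].
  by rewrite -expr2 si2; lra.
by rewrite -ltNge mulrN -expr2 si2 => rho_lt0; lra.
Qed.

End OscarOptimality.

Theorem corollary2 (R : rcfType) (n p : nat) (l1 l2 : R)
  (A : 'M[R]_(n, p)) (y : 'cV[R]_n) (xh : 'cV[R]_p) :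
  0 <= l1 -> 0 <= l2 -> 0 < l1 + l2 * (p.-1)%:R ->
  (forall k : 'I_p, \sum_(r < n) A r k = 0) ->
  (forall k : 'I_p, \sum_(r < n) A r k ^+ 2 = 1) ->
  (forall z : 'cV[R]_p, oscar_obj l1 l2 A y xh <= oscar_obj l1 l2 A y z) ->
  forall i j : 'I_p,
    norm2 y * Num.sqrt (2 - 2 * (\sum_(r < n) A r i * A r j)
                             * Num.sg (xh i 0 * xh j 0)) < l2 ->
    `|xh i 0| = `|xh j 0|.
Proof.
move=> l1_ge0 l2_ge0 _ _ unit_cols xh_opt i j small.
have [-> // | ij] := eqVneq i j.
have abs_le := oscar_opt_abs_le l1_ge0 l2_ge0 unit_cols xh_opt.
apply/le_anti; rewrite abs_le //= abs_le 1?eq_sym //.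
by under eq_bigr do rewrite mulrC; rewrite [xh j 0 * _]mulrC.
Qed.
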